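(* Let $c>0$, $0<q_1<q_2<1$, $a,b\in\mathbb{R}$, and let $\Delta(s)=s^{q_1+q_2}+as^{q_2}+bs^{q_1}+c$, with principal values of the complex power functions. 1. If $a+1>0$, $a+b>0$ and $b+c>0$, then all roots of $\Delta(s)$ lie in the open left half-plane, regardless of $q_1$ and $q_2$. 2. If $a+b+c+1\le 0$, then $\Delta(s)$ has at least one positive real root, regardless of $q_1$ and $q_2$.
   Context: Principal value: $s^{q}=|s|^q e^{iq\arg(s)}$ with $\arg(s)\in(-\pi,\pi]$. *)

From Stdlib Require Import Reals.
From Coquelicot Require Import Coquelicot.
Open Scope R_scope.

(* Principal argument arg(s) in (-PI, PI] (the usual atan2); arg 0 := 0. *)
Definition carg (z : C) : R :=
  let x := Re z in let y := Im z in
  if Rlt_dec 0 x then atan (y / x)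
  else if Rlt_dec x 0 then
    (if Rle_dec 0 y then atan (y / x) + PI else atan (y / x) - PI)
  else
    if Rlt_dec 0 y then PI / 2
    else if Rlt_dec y 0 then - (PI / 2) else 0.

Definition cpow (s : C) (q : R) : C :=
  if Req_EM_T (Cmod s) 0 then 0%C
  else Cmult (RtoC (Rpower (Cmod s) q))
             (cos (q * carg s), sin (q * carg s)).

Definition charDelta (q1 q2 a b c : R) (s : C) : C :=
  Cplus (Cplus (Cplus (cpow s (q1 + q2)) (Cmult (RtoC a) (cpow s q2)))
               (Cmult (RtoC b) (cpow s q1)))
        (RtoC c).

(* Write s = r e^{it} with r > 0 and |t| <= PI/2, and put R1 = r^q1, R2 = r^q2,
   S1 = sin (q1 t), S2 = sin (q2 t), S3 = sin ((q1 + q2) t).  For t > 0,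
   Im Delta = R1 R2 S3 + a R2 S2 + b R1 S1.  The weighted AM-GM inequality and the
   concavity of sin on [0, PI] give R2 S2 <= R1 R2 S3 + R1 S1 and
   R1 S2 <= R2 S1 + S3.  If b >= 0 the first one makes Im Delta > 0; if b < 0 the
   second one makes -Im (e^{-i(q1+q2)t} Delta) = a R2 S1 + b R1 S2 + c S3 > 0.
   For t = 0 the same two inequalities, with every sine replaced by 1, show
   Delta(r) > 0.  The positive root of part 2 comes from the intermediate value
   theorem: Delta(x) tends to c > 0 as x -> 0+, and Delta(1) = 1 + a + b + c. *)
From Stdlib Require Import Reals Lra Psatz.
From Coquelicot Require Import Coquelicot.
Open Scope R_scope.

Lemma Rpower_young x p q : 0 <= p <= q ->
  q * Rpower x p <= p * Rpower x q + (q - p).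
Proof.
  intros [hp hpq]. unfold Rpower. set (L := ln x).
  assert (split_q : exp (q * L) = exp (p * L) * exp ((q - p) * L)).
  { rewrite <- exp_plus. f_equal. ring. }
  assert (split_1 : 1 = exp (p * L) * exp (- (p * L))).
  { rewrite <- exp_plus, Rplus_opp_r, exp_0. reflexivity. }
  pose proof (exp_pos (p * L)) as hE.
  assert (0 <= p * exp (p * L) * (exp ((q - p) * L) - (1 + (q - p) * L))).
  { pose proof (exp_ineq1_le ((q - p) * L)). apply Rmult_le_pos; nra. }
  assert (0 <= (q - p) * exp (p * L) * (exp (- (p * L)) - (1 + - (p * L)))).
  { pose proof (exp_ineq1_le (- (p * L))). apply Rmult_le_pos; nra. }
  rewrite split_q. nra.
Qed.

Lemma Rpower_pos x q : 0 < Rpower x q.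
Proof. apply exp_pos. Qed.

Lemma Rpower_1_l q : Rpower 1 q = 1.
Proof. unfold Rpower. rewrite ln_1, Rmult_0_r. apply exp_0. Qed.

Lemma Rpower_le_of_le_1 x p q : 0 < x <= 1 -> p <= q -> Rpower x q <= Rpower x p.
Proof.
  intros hx hpq. unfold Rpower.
  assert (hln : ln x <= 0) by (rewrite <- ln_1; apply ln_le; lra).
  destruct (Rle_lt_or_eq_dec (q * ln x) (p * ln x)) as [hlt | ->]; [nra | | lra].
  left. apply exp_increasing, hlt.
Qed.

(* sin t / t decreases on (0, PI], by concavity of sin. *)
Lemma sin_mul_le x y : 0 < x < y -> y <= PI -> x * sin y <= y * sin x.
Proof.
  intros hxy hy.
  destruct (MVT_cor2 sin cos 0 x) as [c1 [e1 b1]]; [lra | intros; apply derivable_pt_lim_sin |].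
  destruct (MVT_cor2 sin cos x y) as [c2 [e2 b2]]; [lra | intros; apply derivable_pt_lim_sin |].
  assert (hcos : cos c2 < cos c1) by (apply cos_decreasing_1; lra).
  assert (0 <= x * (y - x) * (cos c1 - cos c2)).
  { apply Rmult_le_pos; [apply Rmult_le_pos |]; lra. }
  rewrite sin_0 in e1.
  assert (sin y = sin x + cos c2 * (y - x)) as -> by lra.
  assert (sin x = cos c1 * x) as -> by lra.
  nra.
Qed.

Section Delta.

Variables q1 q2 : R.
Hypotheses (hq1 : 0 < q1) (hq12 : q1 < q2) (hq2 : q2 < 1).

(* The properties of (sin (q1 t), sin (q2 t), sin ((q1 + q2) t)), 0 < t <= PI/2,
   used in the sign analysis; (1, 1, 1) has them too, which covers t = 0. *)
Definition sine_triple (S1 S2 S3 : R) : Prop :=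
  0 <= S1 /\ 0 <= S2 /\ 0 < S3 /\ q1 * S2 <= q2 * S1 /\ (q2 - q1) * S2 <= q2 * S3.

Lemma sine_triple_1 : sine_triple 1 1 1.
Proof. unfold sine_triple. lra. Qed.

Lemma sine_triple_sin t : 0 < t <= PI / 2 ->
  sine_triple (sin (q1 * t)) (sin (q2 * t)) (sin ((q1 + q2) * t)).
Proof.
  intros ht. pose proof PI_RGT_0.
  assert (hS1 : 0 < sin (q1 * t)) by (apply sin_gt_0; nra).
  assert (hS2 : 0 < sin (q2 * t)) by (apply sin_gt_0; nra).
  assert (hS3 : 0 < sin ((q1 + q2) * t)) by (apply sin_gt_0; nra).
  assert (h12 : q1 * t * sin (q2 * t) <= q2 * t * sin (q1 * t)) by (apply sin_mul_le; nra).
  assert (h23 : (PI - (q1 + q2) * t) * sin (q2 * t) <= (PI - q2 * t) * sin ((q1 + q2) * t)).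
  { rewrite <- (sin_PI_x (q2 * t)), <- (sin_PI_x ((q1 + q2) * t)).
    apply sin_mul_le; nra. }
  assert (hw : (q2 - q1) * (PI - q2 * t) <= q2 * (PI - (q1 + q2) * t)).
  { assert (q2 * t <= t) by nra.
    assert (0 <= q1 * (PI - 2 * (q2 * t))) by (apply Rmult_le_pos; lra).
    nra. }
  repeat split; try lra.
  - apply Rmult_le_reg_r with t; lra.
  - apply Rmult_le_reg_r with (PI - q2 * t); [nra |].
    apply Rmult_le_compat_r with (r := sin (q2 * t)) in hw; [| lra].
    apply Rmult_le_compat_l with (r := q2) in h23; lra.
Qed.

Lemma Rpower_q2_le r S1 S2 S3 : sine_triple S1 S2 S3 ->
  Rpower r q2 * S2 <= Rpower r q1 * Rpower r q2 * S3 + Rpower r q1 * S1.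
Proof.
  intros (hS1 & hS2 & hS3 & h12 & h23).
  pose proof (Rpower_young r (q2 - q1) q2 ltac:(lra)) as young.
  assert (hdiff : Rpower r q2 = Rpower r q1 * Rpower r (q2 - q1)).
  { rewrite <- Rpower_plus. f_equal. ring. }
  pose proof (Rpower_pos r q1) as hR1. pose proof (Rpower_pos r q2) as hR2.
  set (R1 := Rpower r q1) in *. set (R2 := Rpower r q2) in *.
  set (P := Rpower r (q2 - q1)) in *.
  apply Rmult_le_reg_l with q2; [lra |].
  assert (R1 * S2 * (q2 * P) <= R1 * S2 * ((q2 - q1) * R2 + q1)).
  { apply Rmult_le_compat_l; [apply Rmult_le_pos |]; lra. }
  assert (R1 * R2 * ((q2 - q1) * S2) <= R1 * R2 * (q2 * S3)).
  { apply Rmult_le_compat_l; [apply Rmult_le_pos |]; lra. }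
  assert (R1 * (q1 * S2) <= R1 * (q2 * S1)) by (apply Rmult_le_compat_l; lra).
  assert (q2 * (R2 * S2) = R1 * S2 * (q2 * P)) by (rewrite hdiff; ring).
  lra.
Qed.

Lemma Rpower_q1_le r S1 S2 S3 : sine_triple S1 S2 S3 ->
  Rpower r q1 * S2 <= Rpower r q2 * S1 + S3.
Proof.
  intros (hS1 & hS2 & hS3 & h12 & h23).
  pose proof (Rpower_young r q1 q2 ltac:(lra)) as young.
  pose proof (Rpower_pos r q2) as hR2.
  set (R1 := Rpower r q1) in *. set (R2 := Rpower r q2) in *.
  apply Rmult_le_reg_l with q2; [lra |].
  assert (S2 * (q2 * R1) <= S2 * (q1 * R2 + (q2 - q1))) by (apply Rmult_le_compat_l; lra).
  assert (R2 * (q1 * S2) <= R2 * (q2 * S1)) by (apply Rmult_le_compat_l; lra).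
  lra.
Qed.

Variables a b c : R.

Definition delta_re (r t : R) : R :=
  Rpower r q1 * Rpower r q2 * cos ((q1 + q2) * t) + a * Rpower r q2 * cos (q2 * t)
  + b * Rpower r q1 * cos (q1 * t) + c.

Definition delta_im (r t : R) : R :=
  Rpower r q1 * Rpower r q2 * sin ((q1 + q2) * t) + a * Rpower r q2 * sin (q2 * t)
  + b * Rpower r q1 * sin (q1 * t).

Lemma delta_re_opp r t : delta_re r (- t) = delta_re r t.
Proof. unfold delta_re. rewrite <- !Ropp_mult_distr_r, !cos_neg. reflexivity. Qed.

Lemma delta_im_opp r t : delta_im r (- t) = - delta_im r t.
Proof. unfold delta_im. rewrite <- !Ropp_mult_distr_r, !sin_neg. ring. Qed.

Lemma delta_re_0 r :
  delta_re r 0 = Rpower r q1 * Rpower r q2 + a * Rpower r q2 + b * Rpower r q1 + c.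
Proof. unfold delta_re. rewrite !Rmult_0_r, cos_0. ring. Qed.

(* This is -Im (e^{-i(q1+q2)t} Delta): the leading term drops out. *)
Lemma delta_rotated r t :
  sin ((q1 + q2) * t) * delta_re r t - cos ((q1 + q2) * t) * delta_im r t
  = a * Rpower r q2 * sin (q1 * t) + b * Rpower r q1 * sin (q2 * t)
    + c * sin ((q1 + q2) * t).
Proof.
  assert (e1 : sin (q1 * t) = sin ((q1 + q2) * t - q2 * t)) by (f_equal; ring).
  assert (e2 : sin (q2 * t) = sin ((q1 + q2) * t - q1 * t)) by (f_equal; ring).
  rewrite e1, e2, !sin_minus. unfold delta_re, delta_im. ring.
Qed.

Lemma charDelta_polar s : Cmod s <> 0 ->
  charDelta q1 q2 a b c s = (delta_re (Cmod s) (carg s), delta_im (Cmod s) (carg s)).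
Proof.
  intros hs. unfold charDelta, cpow, delta_re, delta_im.
  destruct (Req_EM_T (Cmod s) 0); [contradiction |].
  rewrite !Rpower_plus. unfold Cplus, Cmult, RtoC. simpl. f_equal; ring.
Qed.

Lemma charDelta_Cmod_0 s : Cmod s = 0 -> charDelta q1 q2 a b c s = RtoC c.
Proof.
  intros hs. unfold charDelta, cpow.
  destruct (Req_EM_T (Cmod s) 0); [| contradiction].
  unfold Cplus, Cmult, RtoC. simpl. f_equal; ring.
Qed.

Lemma charDelta_RtoC x : 0 < x -> charDelta q1 q2 a b c (RtoC x) = RtoC (delta_re x 0).
Proof.
  intros hx.
  assert (hmod : Cmod (RtoC x) = x) by (rewrite Cmod_R; apply Rabs_right; lra).
  assert (harg : carg (RtoC x) = 0).
  { unfold carg. simpl. destruct (Rlt_dec 0 x); [| lra].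
    unfold Rdiv. rewrite Rmult_0_l. apply atan_0. }
  rewrite charDelta_polar, hmod, harg by lra.
  unfold delta_im. rewrite !Rmult_0_r, sin_0. unfold RtoC. f_equal. ring.
Qed.

Hypothesis hc : 0 < c.

Section Stability.

Hypotheses (ha1 : 0 < a + 1) (hab : 0 < a + b) (hbc : 0 < b + c).

Lemma delta_form_pos r S1 S2 S3 : sine_triple S1 S2 S3 -> 0 <= b ->
  0 < Rpower r q1 * Rpower r q2 * S3 + a * Rpower r q2 * S2 + b * Rpower r q1 * S1.
Proof.
  intros hS hb. pose proof (Rpower_q2_le r S1 S2 S3 hS) as hslack.
  destruct hS as (hS1 & hS2 & hS3 & _ & _).
  pose proof (Rpower_pos r q1) as hR1. pose proof (Rpower_pos r q2) as hR2.
  set (R1 := Rpower r q1) in *. set (R2 := Rpower r q2) in *.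
  assert (hlead : 0 < R1 * R2 * S3).
  { apply Rmult_lt_0_compat; [apply Rmult_lt_0_compat |]; lra. }
  assert (0 <= R1 * S1) by (apply Rmult_le_pos; lra).
  destruct (Rle_or_lt 0 a) as [ha | ha].
  - assert (0 <= a * R2 * S2) by (apply Rmult_le_pos; [apply Rmult_le_pos |]; lra).
    assert (0 <= b * R1 * S1) by (apply Rmult_le_pos; [apply Rmult_le_pos |]; lra).
    lra.
  - assert (0 < (1 + a) * (R1 * R2 * S3)) by (apply Rmult_lt_0_compat; lra).
    assert (0 <= (a + b) * (R1 * S1)) by (apply Rmult_le_pos; lra).
    assert (0 <= - a * (R1 * R2 * S3 + R1 * S1 - R2 * S2)) by (apply Rmult_le_pos; lra).
    lra.
Qed.

Lemma delta_rotated_form_pos r S1 S2 S3 : sine_triple S1 S2 S3 -> b < 0 ->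
  0 < a * Rpower r q2 * S1 + b * Rpower r q1 * S2 + c * S3.
Proof.
  intros hS hb. pose proof (Rpower_q1_le r S1 S2 S3 hS) as hslack.
  destruct hS as (hS1 & hS2 & hS3 & _ & _).
  pose proof (Rpower_pos r q2) as hR2.
  set (R1 := Rpower r q1) in *. set (R2 := Rpower r q2) in *.
  assert (0 <= (a + b) * (R2 * S1)) by (apply Rmult_le_pos; [| apply Rmult_le_pos]; lra).
  assert (0 < (b + c) * S3) by (apply Rmult_lt_0_compat; lra).
  assert (0 <= - b * (R2 * S1 + S3 - R1 * S2)) by (apply Rmult_le_pos; lra).
  lra.
Qed.

Lemma delta_re_0_pos r : 0 < delta_re r 0.
Proof.
  rewrite delta_re_0.
  pose proof (delta_form_pos r 1 1 1 sine_triple_1) as hform.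
  pose proof (delta_rotated_form_pos r 1 1 1 sine_triple_1) as hrot.
  assert (0 < Rpower r q1 * Rpower r q2) by (apply Rmult_lt_0_compat; apply Rpower_pos).
  destruct (Rle_or_lt 0 b) as [hb | hb].
  - specialize (hform hb). lra.
  - specialize (hrot hb). lra.
Qed.

Lemma delta_no_root_sector r t : 0 < t <= PI / 2 ->
  delta_re r t = 0 -> delta_im r t = 0 -> False.
Proof.
  intros ht hre him. pose proof (sine_triple_sin t ht) as hS.
  destruct (Rle_or_lt 0 b) as [hb | hb].
  - pose proof (delta_form_pos r _ _ _ hS hb). unfold delta_im in him. lra.
  - pose proof (delta_rotated_form_pos r _ _ _ hS hb) as hpos.
    rewrite <- delta_rotated, hre, him in hpos. lra.
Qed.

Lemma delta_no_root_right_half r t : -(PI / 2) <= t <= PI / 2 ->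
  delta_re r t = 0 -> delta_im r t = 0 -> False.
Proof.
  intros ht hre him.
  assert (delta_re r (Rabs t) = 0 /\ delta_im r (Rabs t) = 0) as [hre' him'].
  { unfold Rabs. destruct (Rcase_abs t); rewrite ?delta_re_opp, ?delta_im_opp; lra. }
  destruct (Req_dec t 0) as [-> | ht0].
  - pose proof (delta_re_0_pos r). lra.
  - apply (delta_no_root_sector r (Rabs t)); [| assumption ..].
    unfold Rabs. destruct (Rcase_abs t); lra.
Qed.

Lemma carg_Re_nonneg s : 0 <= Re s -> -(PI / 2) <= carg s <= PI / 2.
Proof.
  intros hs. pose proof PI_RGT_0. unfold carg.
  destruct (Rlt_dec 0 (Re s)).
  - pose proof (atan_bound (Im s / Re s)). lra.
  - destruct (Rlt_dec (Re s) 0); [lra |].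
    destruct (Rlt_dec 0 (Im s)); [lra |].
    destruct (Rlt_dec (Im s) 0); lra.
Qed.

Lemma charDelta_root_Re_neg s : charDelta q1 q2 a b c s = 0%C -> Re s < 0.
Proof.
  intros hroot. destruct (Rlt_or_le (Re s) 0) as [| hs]; [assumption | exfalso].
  destruct (Req_dec (Cmod s) 0) as [hmod | hmod].
  - rewrite charDelta_Cmod_0 in hroot by exact hmod.
    apply (f_equal fst) in hroot. simpl in hroot. lra.
  - rewrite charDelta_polar in hroot by exact hmod.
    injection hroot as hre him.
    exact (delta_no_root_right_half _ _ (carg_Re_nonneg s hs) hre him).
Qed.

End Stability.

Lemma delta_re_0_pos_near_0 : exists x, 0 < x < 1 /\ 0 < delta_re x 0.
Proof.
  set (K := Rabs a + Rabs b).
  assert (hK : 0 <= K) by (unfold K; pose proof (Rabs_pos a); pose proof (Rabs_pos b); lra).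
  set (d := c / (2 * c + K)).
  assert (hd : 0 < d < 1).
  { unfold d. split; [apply Rdiv_lt_0_compat; lra |].
    apply Rlt_div_l; lra. }
  assert (hKd : K * d < c).
  { unfold d.
    replace (K * (c / (2 * c + K))) with (c * (K / (2 * c + K))) by (field; lra).
    assert (K / (2 * c + K) < 1) by (apply Rlt_div_l; lra).
    nra. }
  set (x := Rpower d (/ q1)).
  assert (hx : 0 < x < 1).
  { split; [apply Rpower_pos |].
    rewrite <- (Rpower_1_l (/ q1)).
    apply Rlt_Rpower_l; [apply Rinv_0_lt_compat |]; lra. }
  assert (hx1 : Rpower x q1 = d).
  { unfold x. rewrite Rpower_mult, Rinv_l, Rpower_1; lra. }
  assert (hx2 : Rpower x q2 <= d) by (rewrite <- hx1; apply Rpower_le_of_le_1; lra).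
  exists x. split; [exact hx |]. rewrite delta_re_0.
  pose proof (Rpower_pos x q2) as hR2.
  rewrite hx1.
  pose proof (Rle_abs (- a)) as habs_a. pose proof (Rle_abs (- b)) as habs_b.
  rewrite Rabs_Ropp in habs_a, habs_b.
  assert (- a * Rpower x q2 <= Rabs a * d).
  { apply Rle_trans with (Rabs a * Rpower x q2).
    - apply Rmult_le_compat_r; lra.
    - apply Rmult_le_compat_l; [apply Rabs_pos | exact hx2]. }
  assert (- b * d <= Rabs b * d) by (apply Rmult_le_compat_r; lra).
  assert (0 < d * Rpower x q2) by (apply Rmult_lt_0_compat; lra).
  unfold K in hKd. lra.
Qed.

Lemma delta_re_0_continuous x : 0 < x -> continuity_pt (fun r => delta_re r 0) x.
Proof.
  intros hx. apply continuity_pt_filterlim, (ex_derive_continuous (fun r => delta_re r 0)).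
  unfold delta_re. auto_derive.
  repeat split; eexists; apply is_derive_Reals, derivable_pt_lim_power; exact hx.
Qed.

Lemma charDelta_pos_root : a + b + c + 1 <= 0 ->
  exists x, 0 < x /\ charDelta q1 q2 a b c (RtoC x) = 0%C.
Proof.
  intros habc. destruct delta_re_0_pos_near_0 as [x0 [hx0 hfx0]].
  assert (hf1 : delta_re 1 0 = 1 + a + b + c).
  { rewrite delta_re_0, !Rpower_1_l. ring. }
  assert (exists x, x0 <= x <= 1 /\ delta_re x 0 = 0) as [x [hx hfx]].
  { destruct (Req_dec (delta_re 1 0) 0) as [h1 | h1].
    - exists 1. split; [lra | exact h1].
    - destruct (Ranalysis5.IVT_interv (fun r => - delta_re r 0) x0 1) as [x [hx hfx]];
        try lra.
      + intros r hr. apply continuity_pt_opp, delta_re_0_continuous. lra.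
      + exists x. split; [exact hx | lra]. }
  exists x. split; [lra |]. rewrite charDelta_RtoC, hfx by lra. reflexivity.
Qed.

End Delta.

Theorem proposition2 (q1 q2 a b c : R)
  (hc : 0 < c) (hq1 : 0 < q1) (hq12 : q1 < q2) (hq2 : q2 < 1) :
  ((0 < a + 1 /\ 0 < a + b /\ 0 < b + c) ->
     forall s : C, charDelta q1 q2 a b c s = 0%C -> Re s < 0)
  /\
  (a + b + c + 1 <= 0 ->
     exists x : R, 0 < x /\ charDelta q1 q2 a b c (RtoC x) = 0%C).
Proof.
  split.
  - intros (ha1 & hab & hbc).
    exact (charDelta_root_Re_neg q1 q2 hq1 hq12 hq2 a b c hc ha1 hab hbc).
  - exact (charDelta_pos_root q1 q2 hq1 hq12 a b c hc).
Qed.
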